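(* Let $\lambda>0$, $d_v>0$, $\epsilon\ge0$, $m=\lambda\pi d_v^2$, $k\ge0$, and let $r_1,\dots,r_k\ge0$ be given ranges, with $f(\mathbf x)$ the set of all orderings of $(r_1,\dots,r_k)$. With $A_i=\{\mathbf y\in\mathbb R^2:\ |\|\mathbf y\|_2-r_i|\le\epsilon\}$ and $|A_i|$ its Lebesgue measure, $$\mathbb P\big[\Delta_s(f(\mathbf x),F(\mathbf 0))\le\epsilon\big]\le m^k e^{-m}\prod_{i=1}^k\frac{|A_i|}{\pi d_v^2}.$$
   Context: Landmarks seen from the origin are the points of a homogeneous Poisson point process $\Phi_{\mathbf 0}$ of intensity $\lambda$ on $\mathbb R^2$; a landmark is visible from $\mathbf 0$ if its distance to $\mathbf 0$ is at most $d_v$, and $N_{\mathbf 0}$ is the number of visible landmarks. The random measurement $F(\mathbf 0)$ is the set of all vectors in $\mathbb R^{N_{\mathbf 0}}$ obtained by listing, in some order, the distances from $\mathbf 0$ to the visible landmarks. For vectors, $\Delta_v(\mathbf u,\mathbf w)=\|\mathbf u-\mathbf w\|_\infty$ if they have the same dimension (equal to $0$ if both are empty) and $\infty$ otherwise; for sets of vectors, $\Delta_s(f,F)=\min_{\mathbf u\in f,\mathbf w\in F}\Delta_v(\mathbf u,\mathbf w)$. *)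

From HB Require Import structures.
From mathcomp Require Import all_boot all_order all_algebra.
From mathcomp Require Import all_classical all_reals all_analysis.
Set Implicit Arguments. Unset Strict Implicit. Unset Printing Implicit Defensive.
Import Order.TTheory GRing.Theory Num.Theory.
Local Open Scope classical_set_scope.
Local Open Scope ring_scope.

Section Defs.
Variable R : realType.

Definition norm2 (y : R * R) : R := Num.sqrt (y.1 ^+ 2 + y.2 ^+ 2).

Definition leb2 : set (R * R) -> \bar R :=
  (@lebesgue_measure R \x @lebesgue_measure R)%E.

Definition Delta_v (u w : seq R) : \bar R :=
  if size u == size w then
    (\big[Num.max/0]_(i < size u) `|nth 0 u i - nth 0 w i|)%:E
  else +oo%E.

Definition Delta_s (f F : set (seq R)) : \bar R :=
  ereal_inf [set Delta_v u w | u in f & w in F].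

Definition orderings (s : seq R) : set (seq R) := [set u | perm_eq u s].

Definition disk (dv : R) : set (R * R) := [set y | norm2 y <= dv].

Definition annulus (r eps : R) : set (R * R) := [set y | `|norm2 y - r| <= eps].

(* F(0): all orderings of the distances from 0 to the visible landmarks
   X_0, ..., X_{N-1} *)
Definition measurement (T : Type) (N : T -> nat) (X : nat -> T -> R * R) (w : T)
  : set (seq R) := orderings [seq norm2 (X i w) | i <- iota 0 (N w)].

(* The visible part (inside the disk of radius dv) of a homogeneous PPP of
   intensity lam on R^2: the number N of visible landmarks is Poisson with mean
   m = lam * pi * dv^2, the landmarks X_0, X_1, ... are i.i.d. uniform on the
   disk, and N, X_0, X_1, ... are mutually independent. *)
Definition visible_PPP (d : measure_display) (T : measurableType d)
  (P : probability T R) (lam dv : R) (N : T -> nat) (X : nat -> T -> R * R) :=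
  let m := lam * pi * dv ^+ 2 in
  [/\ (forall n, measurable [set w | N w = n]),
      (forall i, measurable_fun setT (X i)),
      (forall n, P [set w | N w = n] = (m ^+ n * expR (- m) / n`!%:R)%:E),
      (forall i (B : set (R * R)), measurable B ->
         P [set w | B (X i w)] = (leb2 (B `&` disk dv) * ((pi * dv ^+ 2)^-1)%:E)%E) &
      (forall n (S : set nat) (B : nat -> set (R * R)), (forall i, measurable (B i)) ->
         P ([set w | S (N w)] `&` [set w | forall i, (i < n)%N -> B i (X i w)]) =
         (P [set w | S (N w)] * \prod_(i < n) P [set w | B i (X i w)])%E)].

End Defs.

From mathcomp Require Import all_boot all_order all_algebra.
From mathcomp Require Import all_classical all_reals all_analysis.
From mathcomp Require Import measurable_realfun.
Import Order.TTheory GRing.Theory Num.Theory.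
Local Open Scope classical_set_scope.
Local Open Scope ring_scope.

(* The measured distances match an ordering u of the ranges within [eps]
   exactly when N = k and the i-th visible landmark lies in the annulus
   A_(u_i) for every i < k, so the event is the union over the orderings u
   of r of these events. By independence each of them has probability
   P[N = k] * prod_i P[X_i in A_(u_i)]; as X_i is uniform on the disk,
   P[X_i in A] <= |A| / (pi dv^2), and the product does not depend on the
   ordering. There are at most k! orderings, which cancels the k! in
   P[N = k] = m^k e^-m / k!. *)

Lemma seq_has_min {disp} {T : orderType disp} (s : seq T) x0 : x0 \in s ->
  exists2 x, x \in s & {in s, forall y, (x <= y)%O}.
Proof.
move=> s_x0; have i0 : 'I_(size s) by exists (index x0 s); rewrite index_mem.
have [i _ min_i] := @arg_minP _ _ _ i0 xpredT (nth x0 s) isT.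
exists (nth x0 s i); first exact: mem_nth.
by move=> _ /(nthP x0)[j lt_j <-]; exact: (min_i (Ordinal lt_j)).
Qed.

Lemma size_permutations_leq {T : eqType} (s : seq T) :
  (size (permutations s) <= (size s)`!)%N.
Proof.
case: s => [//|x0 s']; set s := x0 :: s'.
rewrite -[in X in (_ <= X)%N](size_iota 0 (size s)).
rewrite -size_permutations ?iota_uniq // -(size_map (map (nth x0 s))).
apply: uniq_leq_size => [|u]; first exact: permutations_uniq.
rewrite mem_permutations => /(perm_iotaP x0)[Is Is_perm ->].
by apply: map_f; rewrite mem_permutations.
Qed.

Lemma lee_prod {R : realDomainType} {I : Type} (s : seq I) (f g : I -> \bar R) :
  (forall i, 0 <= f i)%E -> (forall i, f i <= g i)%E ->
  (\prod_(i <- s) f i <= \prod_(i <- s) g i)%E.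
Proof.
move=> f_ge0 le_fg; elim: s => [|i s IHs]; first by rewrite !big_nil.
by rewrite !big_cons lee_pmul // prode_ge0.
Qed.

Lemma le_mu_bigsetU_seq {d} {R : realFieldType} {T : ringOfSetsType d}
    (mu : {content set T -> \bar R}) {I : Type} (s : seq I) (F : I -> set T) :
  (forall i, measurable (F i)) ->
  (mu (\big[setU/set0]_(i <- s) F i) <= \sum_(i <- s) mu (F i))%E.
Proof.
move=> mF; case: s => [|i0 s]; first by rewrite !big_nil measure0.
rewrite !(big_nth i0) !big_mkord.
exact: (@Boole_inequality _ _ _ mu (F \o nth i0 (i0 :: s)) _ (fun j _ => mF _)).
Qed.

Lemma measurable_sublevel {d} {T : measurableType d} {R : realType}
    (f : T -> R) e :
  measurable_fun setT f -> measurable [set y | f y <= e].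
Proof.
move=> mf; have := mf measurableT _ (measurable_itv `]-oo, e]).
by rewrite setTI.
Qed.

Section distances.
Context {R : realType}.
Implicit Types (u v r s : seq R) (e : R).

Lemma Delta_v_leP u v e : 0 <= e ->
  (Delta_v u v <= e%:E)%E <->
  size u = size v /\ forall i, (i < size u)%N -> `|nth 0 u i - nth 0 v i| <= e.
Proof.
move=> e0; rewrite /Delta_v; case: eqP => [uv|uv]; last first.
  by rewrite leye_eq; split=> [|[]].
rewrite lee_fin; split=> [/bigmax_leP[_ le_e]|[_ le_e]].
  by split=> // i lt_i; exact: (le_e (Ordinal lt_i)).
by apply/bigmax_leP; split=> // i _; exact: le_e.
Qed.

Lemma Delta_s_orderings_attained r s e :
  (Delta_s (orderings r) (orderings s) <= e%:E)%E ->
  exists u v, [/\ perm_eq u r, perm_eq v s & (Delta_v u v <= e%:E)%E].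
Proof.
pose L := [seq Delta_v u v | u <- permutations r, v <- permutations s].
have /seq_has_min[_ /allpairsP[[u v] /= [ur vs ->]] min_uv] : Delta_v r s \in L.
  by apply: allpairs_f; rewrite mem_permutations.
move=> le_e; exists u, v; rewrite -!mem_permutations; split=> //.
apply: le_trans le_e; apply: le_ereal_inf_tmp => _ [u' ur' [v' vs' <-]].
by apply: min_uv; apply: allpairs_f; rewrite mem_permutations;
  [exact: ur'|exact: vs'].
Qed.

(* Reordering the measured vector along a matching reorders the ranges too,
   so one may keep the measured distances in their given order. *)
Lemma Delta_s_orderingsP r s e : 0 <= e ->
  (Delta_s (orderings r) (orderings s) <= e%:E)%E <->
  exists2 u, perm_eq u r & (Delta_v u s <= e%:E)%E.
Proof.
move=> e0; split; last first.
  move=> [u ur le_e]; apply: ge_ereal_inf; exists (Delta_v u s) => //.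
  by exists u; [exact: ur | exists s; first exact: perm_refl].
move=> /Delta_s_orderings_attained[u [v [ur vs]]].
move=> /(Delta_v_leP _ _ _ e0)[uv le_e].
rewrite perm_sym in vs; have /(perm_iotaP 0)[Is Is_perm s_def] := vs.
exists (map (nth 0 u) Is).
  by apply: perm_trans ur; apply/(perm_iotaP 0); exists Is; rewrite ?uv.
apply/(Delta_v_leP _ _ _ e0); rewrite s_def !size_map; split=> // i lt_i.
have := mem_nth 0 lt_i; rewrite (perm_mem Is_perm) mem_iota add0n -uv.
move=> /andP[_ lt_Isi].
by rewrite !(nth_map 0) //; exact: le_e.
Qed.

Lemma measurable_norm2 : measurable_fun setT (@norm2 R).
Proof.
apply: (measurableT_comp (continuous_measurable_fun (@sqrt_continuous R))).
by apply: measurable_funD; apply: measurable_funX;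
  [exact: measurable_fst|exact: measurable_snd].
Qed.

Lemma measurable_annulus c e : measurable (annulus c e).
Proof.
apply: measurable_sublevel.
have mB : measurable_fun setT (fun y : R * R => norm2 y - c).
  by apply: measurable_funB; [exact: measurable_norm2|exact: measurable_cst].
exact: (measurableT_comp (@normr_measurable R setT) mB).
Qed.

Lemma measurable_disk e : measurable (disk e).
Proof. exact: measurable_sublevel measurable_norm2. Qed.

End distances.

Section visible_landmarks.
Context {d : measure_display} {T : measurableType d} {R : realType}.
Context {P : probability T R} {lam dv : R}.
Context {N : T -> nat} {X : nat -> T -> R * R}.
Hypothesis PPP : visible_PPP P lam dv N X.

Let inv_area_ge0 : (0 <= ((pi * dv ^+ 2)^-1)%:E)%E.
Proof. by rewrite lee_fin invr_ge0 mulr_ge0 ?sqr_ge0 ?pi_ge0. Qed.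

Definition match_event eps (u : seq R) : set T :=
  [set w | N w = size u] `&`
  [set w | forall i, (i < size u)%N -> annulus (nth 0 u i) eps (X i w)].

Lemma measurement_event_bigsetU r eps : 0 <= eps ->
  [set w | (Delta_s (orderings r) (measurement N X w) <= eps%:E)%E] =
  \big[setU/set0]_(u <- permutations r) match_event eps u.
Proof.
move=> eps0; rewrite -bigcup_seq; apply/seteqP; split=> w /=.
  rewrite /measurement (Delta_s_orderingsP _ _ _ eps0) => -[u ur].
  move=> /(Delta_v_leP _ _ _ eps0)[size_u close_u].
  rewrite size_map size_iota in size_u.
  exists u; first by rewrite /= mem_permutations.
  split=> [|i lt_i]; first by rewrite /= size_u.
  move: (close_u _ lt_i); rewrite (nth_map 0) ?size_iota -?size_u //.
  by rewrite nth_iota -?size_u // add0n distrC; exact: id.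
move=> [u /=]; rewrite mem_permutations => ur [/= size_u close_u].
rewrite /measurement (Delta_s_orderingsP _ _ _ eps0); exists u => //.
apply/(Delta_v_leP _ _ _ eps0); rewrite size_map size_iota size_u.
split=> // i lt_i; rewrite (nth_map 0) ?size_iota // nth_iota // add0n distrC.
exact: close_u.
Qed.

Lemma measurable_match_event eps u : measurable (match_event eps u).
Proof.
have [mN mX _ _ _] := PPP; apply: measurableI; first exact: mN.
have -> : [set w | forall i, (i < size u)%N -> annulus (nth 0 u i) eps (X i w)]
    = \bigcap_(i in [set i | (i < size u)%N])
        (X i @^-1` annulus (nth 0 u i) eps).
  by apply/seteqP; split=> w.
apply: bigcap_measurableType => i _; rewrite -[E in measurable E]setTI.
by apply: mX => //; exact: measurable_annulus.
Qed.

Lemma match_event_le eps u :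
  (P (match_event eps u) <= P [set w | N w = size u] *
     \prod_(x <- u) (leb2 (annulus x eps) * ((pi * dv ^+ 2)^-1)%:E))%E.
Proof.
have [_ _ _ PX indep] := PPP.
rewrite (indep (size u) [set size u] _ (fun i => measurable_annulus _ _)).
apply: lee_wpmul2l; first exact: measure_ge0.
rewrite (big_nth 0) big_mkord.
apply: lee_prod => [i|i]; first exact: measure_ge0.
rewrite PX; last exact: measurable_annulus.
apply: lee_wpmul2r; first exact: inv_area_ge0.
apply: le_measure; rewrite ?inE; last exact: subIsetl.
  exact: measurableI (measurable_annulus _ _) (measurable_disk _).
exact: measurable_annulus.
Qed.

Local Notation m := (lam * pi * dv ^+ 2).

Lemma measurement_match_prob_le r eps : 0 <= eps ->
  (P [set w | (Delta_s (orderings r) (measurement N X w) <= eps%:E)%E]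
   <= (m ^+ size r * expR (- m))%:E *
      \prod_(i < size r)
        (leb2 (annulus (nth 0%R r i) eps) * ((pi * dv ^+ 2)^-1)%:E))%E.
Proof.
move=> eps0; have [_ _ PN _ _] := PPP.
pose A x := (leb2 (annulus x eps) * ((pi * dv ^+ 2)^-1)%:E)%E.
pose pk := m ^+ size r * expR (- m) / (size r)`!%:R.
have pk_ge0 : 0 <= pk by rewrite -lee_fin -PN measure_ge0.
have le_sum : (\sum_(u <- permutations r) P (match_event eps u) <=
    \sum_(u <- permutations r) pk%:E * \prod_(i < size r) A (nth 0%R r i))%E.
  rewrite [leLHS]big_seq [leRHS]big_seq; apply: lee_sum => u.
  rewrite mem_permutations => ur.
  apply: le_trans (match_event_le eps u) _.
  rewrite (perm_size ur) (perm_big _ ur) PN (big_nth 0) big_mkord; exact: lexx.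
have := le_mu_bigsetU_seq P (permutations r) _ (measurable_match_event eps).
rewrite -(measurement_event_bigsetU r eps eps0) => /le_trans; apply.
apply: le_trans le_sum _.
rewrite -ge0_sume_distrl => [|u _]; last by rewrite lee_fin.
rewrite sumEFin (big_nth [::]) sumr_const_nat subn0.
apply: lee_wpmul2r.
  by apply: prode_ge0 => i _; rewrite mule_ge0 ?inv_area_ge0 // measure_ge0.
rewrite lee_fin -[m ^+ size r * _](@divfK _ (size r)`!%:R);
  last by rewrite pnatr_eq0 -lt0n fact_gt0.
by rewrite mulr_natr /pk; apply: ler_wpMn2l => //; exact: size_permutations_leq.
Qed.

End visible_landmarks.

Theorem lemma11 (R : realType) (d : measure_display) (T : measurableType d)
  (P : probability T R) (lam dv eps : R) (N : T -> nat) (X : nat -> T -> R * R)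
  (r : seq R) :
  0 < lam -> 0 < dv -> 0 <= eps -> all (fun ri => 0 <= ri) r ->
  visible_PPP P lam dv N X ->
  let m := lam * pi * dv ^+ 2 in
  let k := size r in
  (P [set w | (Delta_s (orderings r) (measurement N X w) <= eps%:E)%E]
   <= (m ^+ k * expR (- m))%:E *
      \prod_(i < k) (leb2 (annulus (nth 0%R r i) eps) * ((pi * dv ^+ 2)^-1)%:E))%E.
Proof.
move=> _ _ eps0 _ PPP; exact: measurement_match_prob_le PPP r eps eps0.
Qed.
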